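(* Let $P$ be a finite poset and $R$ an indecomposable commutative unital ring. Then the group $\mathrm{Aut}(I^3(P,R))$ of $R$-linear algebra automorphisms of $I^3(P,R)$ is isomorphic to the automorphism group $\mathrm{Aut}(P)$ of the poset $P$.
   Context: A commutative ring $R$ is indecomposable if its only idempotents are $0$ and $1$. For a finite poset $P$, let $P^3_\le=\{(x,y,z)\in P^3: x\le y\le z\}$. The third partial flag incidence algebra $I^3(P,R)$ is the $R$-module of all functions $f:P^3_\le\to R$ (pointwise operations) with the (non-associative) multiplication $(fg)(x_1,x_2,x_3)=\sum f(x_1,y_1,y_2)\,g(y_1,y_2,x_3)$, the sum over all $y_1,y_2$ with $x_1\le y_1\le x_2\le y_2\le x_3$. *)

From HB Require Import structures.
From mathcomp Require Import all_boot all_order all_algebra.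
Set Implicit Arguments. Unset Strict Implicit. Unset Printing Implicit Defensive.
Import Order.TTheory GRing.Theory.
Local Open Scope ring_scope.

Definition indecomposable (R : comNzRingType) : Prop :=
  forall e : R, e * e = e -> e = 0 \/ e = 1.

Notation trip P :=
  {t : P * P * P | ((t.1.1 <= t.1.2)%O && (t.1.2 <= t.2)%O)}.

Notation I3 P R := {ffun trip P -> R}.

(* value of f at (x,y,z), extended by 0 outside P^3_<= (never used there) *)
Definition I3ev d (P : finPOrderType d) (R : comNzRingType) (f : I3 P R)
  (x y z : P) : R :=
  match @insub _ (fun t : P * P * P => ((t.1.1 <= t.1.2)%O && (t.1.2 <= t.2)%O))
           (trip P) (x, y, z) with
  | Some t => f t
  | None => 0
  end.

Definition I3mul d (P : finPOrderType d) (R : comNzRingType) (f g : I3 P R)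
  : I3 P R :=
  [ffun t : trip P =>
     let x1 := (val t).1.1 in let x2 := (val t).1.2 in let x3 := (val t).2 in
     \sum_(y1 : P) \sum_(y2 : P |
        [&& (x1 <= y1)%O, (y1 <= x2)%O, (x2 <= y2)%O & (y2 <= x3)%O])
        I3ev f x1 y1 y2 * I3ev g y1 y2 x3].

Definition is_I3_aut d (P : finPOrderType d) (R : comNzRingType)
  (phi : I3 P R -> I3 P R) : Prop :=
  [/\ (forall (a : R) (f g : I3 P R), 
        phi [ffun t => a * f t + g t] = [ffun t => a * phi f t + phi g t]),
      (forall f g : I3 P R, phi (I3mul f g) = I3mul (phi f) (phi g))
    & bijective phi].

Definition is_poset_aut d (P : finPOrderType d) (s : P -> P) : Prop :=
  bijective s /\ (forall x y : P, (s x <= s y)%O = (x <= y)%O).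

From HB Require Import structures.
From mathcomp Require Import all_boot all_order all_algebra.
Set Implicit Arguments. Unset Strict Implicit. Unset Printing Implicit Defensive.
Import Order.TTheory GRing.Theory.
Local Open Scope ring_scope.

(* The diagonal elements e_x = δ(x,x,x) are idempotents and f ↦ f(x,x,x) is multiplicative.
   For an automorphism phi, f ↦ (phi^-1 f)(x,x,x) is then a nonzero multiplicative functional;
   its values on the e_y are idempotents of R, not all zero, so one of them is 1.  Transporting
   the identities (e_x g) e_x = g(x,x,x) e_x, e_x (e_x g) = e_x g and (g e_x) e_x = g e_x by phi
   forces phi(e_x) = e_y, which defines a permutation s of P.  For x <= z, the elements δ(x,x,z)
   and δ(x,z,z) are determined up to scalars by their products with the e's, and
   indecomposability again forces these scalars to be 1 and s x <= s z.  Since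
   δ(a,b,c) = δ(a,b,b) δ(b,b,c), phi is the pushforward of functions along s.  Conversely,
   pushforward along a poset automorphism is an algebra automorphism, and s ↦ pushforward is an
   injective homomorphism. *)

Lemma le_antisym d (T : porderType d) (x y : T) : (x <= y)%O -> (y <= x)%O -> x = y.
Proof. by move=> xy yx; apply: le_anti; rewrite xy yx. Qed.

Lemma finPOrder_lt_ind d (P : finPOrderType d) (Q : P -> Prop) :
  (forall v, (forall w, (w < v)%O -> Q w) -> Q v) -> forall v, Q v.
Proof.
move=> IH v; have [n] := ubnP #|[set w | (w < v)%O]|.
elim: n v => // n IHn v ltv; apply: IH => w ltwv; apply: IHn.
have ltwv_card : (#|[set w' | (w' < w)%O]| < #|[set w | (w < v)%O]|)%N.
  apply: proper_card; apply/properP; split.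
    by apply/subsetP => w'; rewrite !inE => /lt_trans; apply.
  by exists w; rewrite !inE ?ltwv ?ltxx.
by apply: leq_trans ltwv_card _; rewrite -ltnS.
Qed.

Lemma finPOrder_gt_ind d (P : finPOrderType d) (Q : P -> Prop) :
  (forall v, (forall w, (v < w)%O -> Q w) -> Q v) -> forall v, Q v.
Proof. by move=> IH; apply: (@finPOrder_lt_ind _ P^d) => v IHv; apply: IH => w; apply: IHv. Qed.

Section SingleSupport.
Variables (T : finType) (V : nmodType).

Lemma sum_single (F : T -> V) (C : pred T) b :
  (forall y, C y -> y != b -> F y = 0) -> \sum_(y | C y) F y = if C b then F b else 0.
Proof.
move=> F0; case: ifPn => Cb.
  by rewrite (bigD1 b) //= [X in _ + X]big1 ?addr0 // => y /andP[]; apply: F0.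
by apply: big1 => y Cy; apply: F0 => //; apply: contraNneq Cb => <-.
Qed.

Lemma sum2_fst_single (F : T -> T -> V) (C : T -> T -> bool) a :
  (forall y1 y2, C y1 y2 -> y1 != a -> F y1 y2 = 0) ->
  \sum_y1 \sum_(y2 | C y1 y2) F y1 y2 = \sum_(y2 | C a y2) F a y2.
Proof.
move=> F0; rewrite (bigD1 a) //= [X in _ + X]big1 ?addr0 // => y1 y1a.
by apply: big1 => y2 C12; apply: F0.
Qed.

Lemma sum2_snd_single (F : T -> T -> V) (C : T -> T -> bool) b :
  (forall y1 y2, C y1 y2 -> y2 != b -> F y1 y2 = 0) ->
  \sum_y1 \sum_(y2 | C y1 y2) F y1 y2 = \sum_(y1 | C y1 b) F y1 b.
Proof.
move=> F0; rewrite [RHS]big_mkcond; apply: eq_bigr => y1 _.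
by apply: sum_single => y2; apply: F0.
Qed.

Lemma sum2_single (F : T -> T -> V) (C : T -> T -> bool) a b :
  (forall y1 y2, C y1 y2 -> (y1 != a) || (y2 != b) -> F y1 y2 = 0) ->
  \sum_y1 \sum_(y2 | C y1 y2) F y1 y2 = if C a b then F a b else 0.
Proof.
move=> F0; rewrite (sum2_fst_single (a := a)) => [|y1 y2 C12 y1a]; last by rewrite F0 ?y1a.
by apply: sum_single => y2 Cy2 y2b; rewrite F0 ?y2b ?orbT.
Qed.

End SingleSupport.

Section IncidenceAlgebra.
Variables (d : Order.disp_t) (P : finPOrderType d) (R : comNzRingType).
Local Notation A := (I3 P R).
Local Notation "f ** g" := (I3mul f g) (at level 40, left associativity).
Implicit Types (f g h k u : A) (a b c v w x y z : P).

Definition I3delta a b c : A := [ffun t => if val t == (a, b, c) then 1 else 0].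
Local Notation "''e_' x" := (I3delta x x x) (at level 8, x at level 2, format "''e_' x").

Definition I3deltaT (t : trip P) : A := I3delta (val t).1.1 (val t).1.2 (val t).2.

Definition I3scale (r : R) f : A := [ffun t => r * f t].

Lemma tripE (p : P * P * P) : (p.1.1, p.1.2, p.2) = p.
Proof. by case: p => [[]]. Qed.

Variant I3ev_spec x y z : Prop :=
  | I3ev_inside (t : trip P) of val t = (x, y, z) & forall f, I3ev f x y z = f t
  | I3ev_outside of ~~ (x <= y <= z)%O & forall f, I3ev f x y z = 0.

Lemma I3evP x y z : I3ev_spec x y z.
Proof.
have [xyz | xyz] := boolP (x <= y <= z)%O.
  pose t : trip P := Sub (x, y, z) xyz.
  have evE f : I3ev f x y z = f t by rewrite /I3ev insubT.
  exact: (I3ev_inside (SubK _ _ : val t = _) evE).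
by right => // f; rewrite /I3ev insubF //; apply: negbTE.
Qed.

Lemma I3evE f (t : trip P) : I3ev f (val t).1.1 (val t).1.2 (val t).2 = f t.
Proof.
case: (I3evP (val t).1.1 (val t).1.2 (val t).2) => [t' t'E -> | + _]; last by rewrite (valP t).
by congr (f _); apply: val_inj; rewrite t'E tripE.
Qed.

Lemma I3ev_out f x y z : ~~ (x <= y <= z)%O -> I3ev f x y z = 0.
Proof.
case: (I3evP x y z) => [t tE _|//]; have := valP t.
by rewrite tE => ->.
Qed.

Lemma I3_ext f g : (forall x y z, I3ev f x y z = I3ev g x y z) -> f = g.
Proof. by move=> fg; apply/ffunP => t; rewrite -!I3evE fg. Qed.

Lemma I3ev0 x y z : I3ev (0 : A) x y z = 0.
Proof. by case: (I3evP x y z) => [t _ ->|_ ->]; rewrite ?ffunE. Qed.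

Lemma I3ev_sum (I : Type) (r : seq I) (F : I -> A) x y z :
  I3ev (\sum_(i <- r) F i) x y z = \sum_(i <- r) I3ev (F i) x y z.
Proof.
case: (I3evP x y z) => [t _ evE|_ evE]; last by rewrite evE big1.
by rewrite evE sum_ffunE; apply: eq_bigr => i _; rewrite evE.
Qed.

Lemma I3evZ r f x y z : I3ev (I3scale r f) x y z = r * I3ev f x y z.
Proof. by case: (I3evP x y z) => [t _ evE|_ evE]; rewrite !evE ?ffunE ?mulr0. Qed.

Lemma I3ev_delta a b c x y z :
  I3ev (I3delta a b c) x y z = if ((x, y, z) == (a, b, c)) && (x <= y <= z)%O then 1 else 0.
Proof.
case: (I3evP x y z) => [t tE ->|xyz ->]; last by rewrite (negbTE xyz) andbF.
have xyz : (x <= y <= z)%O by have := valP t; rewrite tE.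
by rewrite ffunE tE xyz andbT.
Qed.

Lemma I3delta_eq0 a b c : (I3delta a b c == 0) = ~~ (a <= b <= c)%O.
Proof.
apply/eqP/idP => [/(congr1 (fun f => I3ev f a b c))|abc].
  rewrite I3ev_delta I3ev0 eqxx /=; case: (a <= b <= c)%O => // /eqP.
  by rewrite oner_eq0.
apply: I3_ext => x y z; rewrite I3ev_delta I3ev0.
by case: eqP => // -[-> -> ->]; rewrite (negbTE abc).
Qed.

Lemma idem_inj : injective (fun x => 'e_x).
Proof.
move=> x y /(congr1 (fun f => I3ev f x x x)); rewrite !I3ev_delta eqxx lexx /= !xpair_eqE.
by case: eqP => //= _ /eqP; rewrite oner_eq0.
Qed.

Lemma I3_expand f : f = \sum_t I3scale (f t) (I3deltaT t).
Proof.
apply/ffunP => t; rewrite sum_ffunE (bigD1 t) //= big1 => [|u ut].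
  by rewrite !ffunE tripE eqxx mulr1 addr0.
by rewrite !ffunE tripE val_eqE eq_sym (negbTE ut) mulr0.
Qed.

Lemma I3ev_mul f g x1 x2 x3 :
  I3ev (f ** g) x1 x2 x3 =
  \sum_y1 \sum_(y2 | [&& (x1 <= y1)%O, (y1 <= x2)%O, (x2 <= y2)%O & (y2 <= x3)%O])
     I3ev f x1 y1 y2 * I3ev g y1 y2 x3.
Proof.
case: (I3evP x1 x2 x3) => [t tE ->|x123 ->]; first by rewrite ffunE tE.
symmetry; apply: big1 => y1 _; apply: big1 => y2 /and4P [x1y1 y1x2 x2y2 y2x3].
by move: x123; rewrite (le_trans x1y1 y1x2) (le_trans x2y2 y2x3).
Qed.




Lemma I3ev_delta_mul a b c f x1 x2 x3 :
  I3ev (I3delta a b c ** f) x1 x2 x3 =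
  if [&& x1 == a, (a <= b)%O, (b <= x2)%O, (x2 <= c)%O & (c <= x3)%O] then I3ev f b c x3 else 0.
Proof.
rewrite I3ev_mul (sum2_single (a := b) (b := c)) => [|y1 y2 _ ne]; last first.
  by rewrite I3ev_delta !xpair_eqE; case/orP: ne => /negbTE->; rewrite ?andbF ?mul0r.
rewrite I3ev_delta !xpair_eqE !eqxx !andbT; case: (x1 =P a) => [->|_] /=; last first.
  by rewrite mul0r; case: ifP.
by case: ifP => // /and4P[ab bx2 x2c _]; rewrite ab (le_trans bx2 x2c) mul1r.
Qed.

Lemma I3ev_mul_delta a b c f x1 x2 x3 :
  I3ev (f ** I3delta a b c) x1 x2 x3 =
  if [&& x3 == c, (x1 <= a)%O, (a <= x2)%O, (x2 <= b)%O & (b <= c)%O] then I3ev f x1 a b else 0.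
Proof.
rewrite I3ev_mul (sum2_single (a := a) (b := b)) => [|y1 y2 _ ne]; last first.
  by rewrite I3ev_delta !xpair_eqE; case/orP: ne => /negbTE->; rewrite ?andbF ?mulr0.
rewrite I3ev_delta !xpair_eqE !eqxx /=; case: (x3 =P c) => [->|_] /=; last first.
  by rewrite mulr0; case: ifP.
by case: ifP => // /and4P[_ ax2 x2b bc]; rewrite (le_trans ax2 x2b) bc mulr1.
Qed.

Lemma I3ev_idem_mul a f x1 x2 x3 :
  I3ev ('e_a ** f) x1 x2 x3 = if (x1 == a) && (x2 == a) then I3ev f a a x3 else 0.
Proof.
rewrite I3ev_delta_mul lexx; case: (x1 == a) => //=.
case: (x2 =P a) => [->|x2a]; rewrite ?lexx /=.
  by case: ifPn => // ax3; rewrite I3ev_out //= lexx.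
by case: ifP => // /and3P[ax2 x2a' _]; case: x2a; apply: le_antisym.
Qed.

Lemma I3ev_mul_idem c f x1 x2 x3 :
  I3ev (f ** 'e_c) x1 x2 x3 = if (x2 == c) && (x3 == c) then I3ev f x1 c c else 0.
Proof.
rewrite I3ev_mul_delta lexx andbT; case: (x3 == c); rewrite ?andbF ?andbT //=.
case: (x2 =P c) => [->|x2c]; rewrite ?lexx ?andbT /=.
  by case: ifPn => // x1c; rewrite I3ev_out //= lexx andbT.
by case: ifP => // /and3P[_ cx2 x2c']; case: x2c; apply: le_antisym.
Qed.

Lemma I3ev_mul_diag f g x : I3ev (f ** g) x x x = I3ev f x x x * I3ev g x x x.
Proof.
rewrite I3ev_mul (sum2_single (a := x) (b := x)) ?lexx // => y1 y2 /and4P[xy1 y1x xy2 y2x].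
by rewrite (le_antisym y1x xy1) (le_antisym y2x xy2) eqxx.
Qed.

Lemma I3scale1 f : I3scale 1 f = f.
Proof. by apply/ffunP => t; rewrite ffunE mul1r. Qed.

Lemma I3mulZl r f g : I3scale r f ** g = I3scale r (f ** g).
Proof.
apply: I3_ext => x1 x2 x3; rewrite I3evZ !I3ev_mul mulr_sumr; apply: eq_bigr => y1 _.
by rewrite mulr_sumr; apply: eq_bigr => y2 _; rewrite I3evZ mulrA.
Qed.

Lemma I3mulZr r f g : f ** I3scale r g = I3scale r (f ** g).
Proof.
apply: I3_ext => x1 x2 x3; rewrite I3evZ !I3ev_mul mulr_sumr; apply: eq_bigr => y1 _.
by rewrite mulr_sumr; apply: eq_bigr => y2 _; rewrite I3evZ mulrCA.
Qed.

Ltac basis_calc :=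
  rewrite ?I3evZ ?I3ev_delta ?I3ev0 ?xpair_eqE ?eqxx ?lexx /=;
  repeat (match goal with |- context [?u == ?v] => case: (u =P v) => [?|?]; subst end;
          rewrite ?eqxx ?lexx /=);
  repeat (case: ifP => //=); intros;
  repeat match goal with H : is_true (_ && _) |- _ => case/andP: H => ? ? end;
  try match goal with
  | ne : ?u <> ?v, uv : is_true (?u <= ?v)%O, vu : is_true (?v <= ?u)%O |- _ =>
      case: ne; exact: le_antisym uv vu
  end;
  rewrite ?mul1r ?mulr1 ?mul0r ?mulr0 //;
  try match goal with
  | H : ?c = false |- _ =>
      rewrite (_ : c = true) in H;
      [done | repeat (apply/andP; split); by [|apply: le_trans; eassumption]]
  end.

Lemma mul_idem_idem x : 'e_x ** 'e_x = 'e_x.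
Proof. by apply: I3_ext => x1 x2 x3; rewrite I3ev_idem_mul; basis_calc. Qed.

Lemma idem_mul_idem x g : ('e_x ** g) ** 'e_x = I3scale (I3ev g x x x) 'e_x.
Proof. by apply: I3_ext => x1 x2 x3; rewrite I3ev_mul_idem I3ev_idem_mul; basis_calc. Qed.

Lemma idem_mulK x g : 'e_x ** ('e_x ** g) = 'e_x ** g.
Proof. by apply: I3_ext => x1 x2 x3; rewrite !I3ev_idem_mul; basis_calc. Qed.

Lemma mul_idemK x g : (g ** 'e_x) ** 'e_x = g ** 'e_x.
Proof. by apply: I3_ext => x1 x2 x3; rewrite !I3ev_mul_idem; basis_calc. Qed.

Lemma idem_mul_delta x z : 'e_x ** I3delta x x z = I3delta x x z.
Proof. by apply: I3_ext => x1 x2 x3; rewrite I3ev_idem_mul; basis_calc. Qed.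

Lemma delta_mul_idem x z : I3delta x z z ** 'e_z = I3delta x z z.
Proof. by apply: I3_ext => x1 x2 x3; rewrite I3ev_mul_idem; basis_calc. Qed.

Lemma delta_mul_annihr x z v k : v != z -> I3delta x x z ** (k ** 'e_v) = 0.
Proof.
by move=> /eqP vz; apply: I3_ext => x1 x2 x3; rewrite I3ev_delta_mul I3ev_mul_idem; basis_calc.
Qed.

Lemma delta_mul_annihl x z v k : v != x -> ('e_v ** k) ** I3delta x z z = 0.
Proof.
by move=> /eqP vx; apply: I3_ext => x1 x2 x3; rewrite I3ev_mul_delta I3ev_idem_mul; basis_calc.
Qed.

Lemma delta_mul_delta a b c : I3delta a b b ** I3delta b b c = I3delta a b c.
Proof. by apply: I3_ext => x1 x2 x3; rewrite I3ev_delta_mul; basis_calc. Qed.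

Lemma idem_mul_edges x z : 'e_x ** (I3delta x x z ** I3delta x z z) = I3delta x x z.
Proof. by apply: I3_ext => x1 x2 x3; rewrite I3ev_idem_mul I3ev_delta_mul; basis_calc. Qed.

Lemma edges_mul_idem x z : (I3delta x x z ** I3delta x z z) ** 'e_z = I3delta x z z.
Proof. by apply: I3_ext => x1 x2 x3; rewrite I3ev_mul_idem I3ev_delta_mul; basis_calc. Qed.

Section Linear.
Variable phi : A -> A.
Hypothesis phi_lin :
  forall (r : R) f g, phi [ffun t => r * f t + g t] = [ffun t => r * phi f t + phi g t].

Lemma I3lin0 : phi 0 = 0.
Proof.
have phi00 : phi 0 = phi 0 + phi 0.
  have := phi_lin 1 0 0.
  have -> : [ffun t => 1 * (0 : A) t + (0 : A) t] = 0.
    by apply/ffunP => t; rewrite !ffunE mul1r addr0.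
  by move=> {1}->; apply/ffunP => t; rewrite !ffunE mul1r.
by have := subrr (phi 0); rewrite {1}phi00 addrK.
Qed.

Lemma I3linD f g : phi (f + g) = phi f + phi g.
Proof.
have -> : f + g = [ffun t => 1 * f t + g t] by apply/ffunP => t; rewrite !ffunE mul1r.
by rewrite phi_lin; apply/ffunP => t; rewrite !ffunE mul1r.
Qed.

Lemma I3linZ r f : phi (I3scale r f) = I3scale r (phi f).
Proof.
have -> : I3scale r f = [ffun t => r * f t + (0 : A) t] by apply/ffunP => t; rewrite !ffunE addr0.
by rewrite phi_lin I3lin0; apply/ffunP => t; rewrite !ffunE addr0.
Qed.

Lemma I3lin_expand f : phi f = \sum_t I3scale (f t) (phi (I3deltaT t)).
Proof.
rewrite {1}(I3_expand f) (big_morph phi I3linD I3lin0).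
by apply: eq_bigr => t _; rewrite I3linZ.
Qed.

End Linear.

Lemma is_I3_aut_inv (phi psi : A -> A) :
  is_I3_aut phi -> cancel phi psi -> cancel psi phi -> is_I3_aut psi.
Proof.
case=> phi_lin phi_mul _ phiK psiK; split; last by exists phi.
  move=> r f g; apply: (can_inj phiK); rewrite psiK phi_lin.
  by apply/ffunP => t; rewrite !ffunE !psiK.
by move=> f g; apply: (can_inj phiK); rewrite psiK phi_mul !psiK.
Qed.

Lemma sandwich_shape u y : (u ** 'e_y) ** u = u ->
  forall a b c, I3ev u a b c = if b == y then I3ev u a y y * I3ev u y y c else 0.
Proof.
move=> uyu a b c; rewrite -{1}uyu I3ev_mul.
rewrite (sum2_single (a := y) (b := y)) => [|y1 y2 _ ne]; last first.
  by move: ne; rewrite I3ev_mul_idem -negb_and => /negbTE->; rewrite mul0r.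
rewrite I3ev_mul_idem !eqxx /=; case: (b =P y) => [->|by_]; rewrite ?lexx /=; last first.
  by case: ifP => // /and4P[_ yb b_y _]; case: by_; apply: le_antisym.
case: (boolP (a <= y)%O) => ay /=; last by rewrite I3ev_out ?mul0r //= lexx andbT.
by case: (boolP (y <= c)%O) => yc //=; rewrite [I3ev u y y c]I3ev_out ?mulr0 //= lexx.
Qed.



Section IdempotentShape.
Variables (u : A) (y : P).
Hypothesis u_shape :
  forall a b c, I3ev u a b c = if b == y then I3ev u a y y * I3ev u y y c else 0.
Hypothesis u_yyy : I3ev u y y y = 1.

Lemma row_vanish :
  (forall h, u ** (u ** h) = u ** h) -> forall v, v != y -> I3ev u y y v = 0.
Proof.
move=> uuh.
have row_sum x2 v : (y <= x2)%O -> (x2 <= v)%O ->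
    \sum_(w | (x2 <= w <= v)%O) I3ev u y y w * I3ev u y y v = I3ev u y y v.
  move=> yx2 x2v; have := congr1 (fun f => I3ev f y x2 v) (uuh (I3delta y v v)).
  rewrite /= I3ev_mul_delta eqxx !lexx yx2 x2v /= => sumE.
  rewrite -[RHS]sumE I3ev_mul (sum2_fst_single (a := y)) => [|y1 y2 _ y1y]; last first.
    by rewrite u_shape (negbTE y1y) mul0r.
  apply: eq_big => [w|w /andP[x2w wv]]; first by rewrite lexx yx2.
  by rewrite I3ev_mul_delta eqxx !lexx (le_trans yx2 x2w) wv.
elim/finPOrder_lt_ind => v IH vy.
case: (boolP (y <= v)%O) => yv; last by rewrite I3ev_out //= lexx.
have vv : I3ev u y y v * I3ev u y y v = I3ev u y y v.
  by rewrite -[RHS](row_sum v v yv) // (big_pred1 v) // => w; rewrite /= eq_le andbC.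
have := row_sum y v (lexx y) yv.
rewrite (bigD1 y) ?lexx ?yv //= (bigD1 v) /=; last by rewrite yv lexx vy.
rewrite big1 => [|w /andP[/andP[/andP[yw wv] wy] wv']]; last first.
  by rewrite IH ?mul0r // lt_neqAle wv' wv.
by rewrite u_yyy mul1r vv addr0 => /(congr1 (fun r => r - I3ev u y y v)); rewrite addrK subrr.
Qed.

Lemma col_vanish :
  (forall h, (h ** u) ** u = h ** u) -> forall v, v != y -> I3ev u v y y = 0.
Proof.
move=> huu.
have col_sum x2 v : (v <= x2)%O -> (x2 <= y)%O ->
    \sum_(w | (v <= w <= x2)%O) I3ev u v y y * I3ev u w y y = I3ev u v y y.
  move=> vx2 x2y; have := congr1 (fun f => I3ev f v x2 y) (huu (I3delta v v y)).
  rewrite /= I3ev_delta_mul eqxx !lexx vx2 x2y /= => sumE.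
  rewrite -[RHS]sumE I3ev_mul (sum2_snd_single (b := y)) => [|y1 y2 _ y2y]; last first.
    by rewrite u_shape (negbTE y2y) mulr0.
  apply: eq_big => [w|w /andP[vw wx2]]; first by rewrite lexx x2y !andbT.
  by rewrite I3ev_delta_mul eqxx !lexx vw (le_trans wx2 x2y).
elim/finPOrder_gt_ind => v IH vy.
case: (boolP (v <= y)%O) => vy'; last by rewrite I3ev_out //= lexx andbT.
have vv : I3ev u v y y * I3ev u v y y = I3ev u v y y.
  by rewrite -[RHS](col_sum v v (lexx v) vy') (big_pred1 v) // => w; rewrite /= eq_le andbC.
have := col_sum y v vy' (lexx y).
rewrite (bigD1 v) ?lexx ?vy' //= (bigD1 y) /=; last by rewrite vy' lexx eq_sym vy.
rewrite big1 => [|w /andP[/andP[/andP[vw wy] wv] wy']]; last first.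
  by rewrite (IH w) ?mulr0 // lt_neqAle eq_sym wv vw.
by rewrite u_yyy mulr1 vv addr0 => /(congr1 (fun r => r - I3ev u v y y)); rewrite addrK subrr.
Qed.

End IdempotentShape.

Definition I3push (s : P -> P) f : A :=
  [ffun w => \sum_(t | (s (val t).1.1, s (val t).1.2, s (val t).2) == val w) f t].

Lemma sum_val_eq f x y z : \sum_(t : trip P | val t == (x, y, z)) f t = I3ev f x y z.
Proof.
case: (I3evP x y z) => [t tE ->|xyz ->].
  by rewrite (big_pred1 t) // => u; rewrite -tE val_eqE.
by rewrite big_pred0 // => u; apply: contraNF xyz => /eqP uE; have := valP u; rewrite uE.
Qed.

Section PushForward.
Variables s s' : P -> P.
Hypotheses (sK : cancel s s') (s'K : cancel s' s).
Hypothesis s_le : forall x y, (s x <= s y)%O = (x <= y)%O.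

Lemma inv_le x y : (s' x <= s' y)%O = (x <= y)%O.
Proof. by rewrite -s_le !s'K. Qed.

Lemma I3ev_push f a b c : I3ev (I3push s f) a b c = I3ev f (s' a) (s' b) (s' c).
Proof.
case: (I3evP a b c) => [w wE ->|abc ->]; last by rewrite I3ev_out // !inv_le.
rewrite ffunE wE -sum_val_eq; apply: eq_bigl => t.
by rewrite -[val t]tripE !xpair_eqE !(can2_eq sK s'K).
Qed.

Lemma I3push_delta a b c : I3push s (I3delta a b c) = I3delta (s a) (s b) (s c).
Proof.
apply: I3_ext => x y z; rewrite I3ev_push !I3ev_delta !inv_le !xpair_eqE.
by rewrite -!(can2_eq s'K sK).
Qed.

Lemma I3push_mul f g : I3push s (f ** g) = I3push s f ** I3push s g.
Proof.
apply: I3_ext => a b c; rewrite I3ev_push !I3ev_mul (reindex_inj (can_inj s'K)) /=.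
apply: eq_bigr => y1 _; rewrite (reindex_inj (can_inj s'K)) /=.
by apply: eq_big => [y2|y2 _]; rewrite ?inv_le // !I3ev_push.
Qed.

Lemma I3push_lin r f g :
  I3push s [ffun t => r * f t + g t] = [ffun t => r * I3push s f t + I3push s g t].
Proof.
apply/ffunP => w; rewrite !ffunE mulr_sumr -big_split /=.
by apply: eq_bigr => t _; rewrite ffunE.
Qed.

End PushForward.

Lemma I3push_aut s : is_poset_aut s -> is_I3_aut (I3push s).
Proof.
case=> [[s' sK s'K] s_le]; have s'_le := inv_le s'K s_le.
split; [exact: I3push_lin | exact: I3push_mul | exists (I3push s') => f].
  by apply: I3_ext => a b c; rewrite (I3ev_push s'K sK) // (I3ev_push sK s'K) // !sK.
by apply: I3_ext => a b c; rewrite (I3ev_push sK s'K) // (I3ev_push s'K sK) // !s'K.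
Qed.

Lemma I3push_comp s1 s2 : is_poset_aut s1 -> is_poset_aut s2 ->
  I3push (s1 \o s2) =1 I3push s1 \o I3push s2.
Proof.
move=> [[s1' s1K s1'K] s1_le] [[s2' s2K s2'K] s2_le] f /=.
have sK : cancel (s1 \o s2) (s2' \o s1') by move=> x /=; rewrite s1K s2K.
have s'K : cancel (s2' \o s1') (s1 \o s2) by move=> x /=; rewrite s2'K s1'K.
have s_le x y : ((s1 \o s2) x <= (s1 \o s2) y)%O = (x <= y)%O by rewrite /= s1_le s2_le.
apply: I3_ext => a b c.
by rewrite (I3ev_push sK s'K s_le) (I3ev_push s1K s1'K s1_le) (I3ev_push s2K s2'K s2_le).
Qed.

Lemma I3push_inj s1 s2 :
  is_poset_aut s1 -> is_poset_aut s2 -> I3push s1 =1 I3push s2 -> s1 =1 s2.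
Proof.
move=> [[s1' s1K s1'K] s1_le] [[s2' s2K s2'K] s2_le] s12 x.
move: (s12 'e_x); rewrite (I3push_delta s1K s1'K s1_le) (I3push_delta s2K s2'K s2_le).
by move/idem_inj.
Qed.

Section Indecomposable.
Hypothesis R_indec : indecomposable R.

Lemma idem_eq1 (r : R) : r * r = r -> r != 0 -> r = 1.
Proof. by move=> /R_indec[->|->] //; rewrite eqxx. Qed.

Lemma mul_functional_idem (chi : A -> R) :
  (forall f g, chi (f ** g) = chi f * chi g) ->
  (forall f, chi f = \sum_t f t * chi (I3deltaT t)) ->
  (exists f, chi f != 0) -> exists y, chi 'e_y = 1.
Proof.
move=> chiM chi_lin [f chif]; case: (pickP (fun y => chi 'e_y != 0)) => [y chiy|chi0].
  by exists y; apply: idem_eq1 => //; rewrite -chiM mul_idem_idem.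
case/eqP: chif; rewrite chi_lin big1 // => -[[[a b] c] abc] _ /=.
rewrite /I3deltaT /= -(delta_mul_delta a b c) -(idem_mul_delta b c) !chiM.
by move/negbFE/eqP: (chi0 b) => ->; rewrite mul0r mulr0 mulr0.
Qed.

Lemma eq_idem u y : u != 0 -> (u ** 'e_y) ** u = u ->
  (forall h, u ** (u ** h) = u ** h) -> (forall h, (h ** u) ** u = h ** u) -> u = 'e_y.
Proof.
move=> u0 uyu uuh huu; have u_shape := sandwich_shape uyu.
have u_yyy : I3ev u y y y = 1.
  apply: idem_eq1; first by rewrite {3}u_shape eqxx.
  apply: contra u0 => /eqP yyy0; apply/eqP/I3_ext => a b c.
  by rewrite u_shape I3ev0 [I3ev u y y c]u_shape eqxx yyy0 mul0r mulr0 if_same.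
apply: I3_ext => a b c; rewrite u_shape I3ev_delta !xpair_eqE.
case: (b =P y) => [->|_]; last by rewrite !andbF.
case: (a =P y) => [->|/eqP ay]; last by rewrite (col_vanish u_shape u_yyy huu ay) mul0r.
case: (c =P y) => [->|/eqP cy]; last by rewrite (row_vanish u_shape u_yyy uuh cy) mulr0.
by rewrite u_yyy mulr1 lexx.
Qed.

Lemma row_shape g a c : 'e_a ** g = g -> (forall h w, w != c -> g ** (h ** 'e_w) = 0) ->
  g = I3scale (I3ev g a a c) (I3delta a a c).
Proof.
move=> ag g0; have row w : w != c -> I3ev g a a w = 0.
  move=> wc; have := congr1 (fun f => I3ev f a a w) (g0 (I3delta a w w) w wc).
  rewrite delta_mul_idem I3ev_mul_delta I3ev0 eqxx !lexx /=.
  by case: (boolP (a <= w)%O) => //= aw _; rewrite I3ev_out //= lexx.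
apply: I3_ext => x1 x2 x3; rewrite -{1}ag I3ev_idem_mul I3evZ I3ev_delta !xpair_eqE.
case: (x1 =P a) => [->|_]; last by rewrite mulr0.
case: (x2 =P a) => [->|_] /=; last by rewrite mulr0.
case: (x3 =P c) => [->|/eqP x3c]; last by rewrite row // mulr0.
rewrite lexx /=; case: (boolP (a <= c)%O) => ac; first by rewrite mulr1.
by rewrite mulr0 I3ev_out //= lexx.
Qed.

Lemma col_shape g a c : g ** 'e_c = g -> (forall h w, w != a -> ('e_w ** h) ** g = 0) ->
  g = I3scale (I3ev g a c c) (I3delta a c c).
Proof.
move=> gc g0; have col w : w != a -> I3ev g w c c = 0.
  move=> wa; have := congr1 (fun f => I3ev f w c c) (g0 (I3delta w w c) w wa).
  rewrite idem_mul_delta I3ev_delta_mul I3ev0 eqxx !lexx /= andbT.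
  by case: (boolP (w <= c)%O) => //= wc _; rewrite I3ev_out //= lexx andbT.
apply: I3_ext => x1 x2 x3; rewrite -{1}gc I3ev_mul_idem I3evZ I3ev_delta !xpair_eqE.
case: (x3 =P c) => [->|_]; last by rewrite !andbF mulr0.
case: (x2 =P c) => [->|_] /=; last by rewrite !andbF mulr0.
case: (x1 =P a) => [->|/eqP x1a]; last by rewrite col // mulr0.
rewrite lexx andbT /=; case: (boolP (a <= c)%O) => ac; first by rewrite mulr1.
by rewrite mulr0 I3ev_out //= lexx andbT.
Qed.

Lemma edges_coef_eq1 a c (r s : R) g h :
  g = I3scale r (I3delta a a c) -> h = I3scale s (I3delta a c c) ->
  g != 0 -> 'e_a ** (g ** h) = g -> (g ** h) ** 'e_c = h -> [/\ (a <= c)%O, r = 1 & s = 1].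
Proof.
move=> -> -> g0 gh_l gh_r.
have ac : (a <= c)%O.
  apply: contraNT g0 => ac; have /eqP-> : I3delta a a c == 0 by rewrite I3delta_eq0 lexx.
  by apply/eqP/ffunP => t; rewrite !ffunE mulr0.
have r0 : r != 0 by apply: contraNneq g0 => r0; apply/eqP/ffunP => t; rewrite !ffunE r0 mul0r.
have rs_r : r * s = r.
  move/(congr1 (fun f => I3ev f a a c)): gh_l.
  by rewrite I3mulZl !I3mulZr idem_mul_edges !I3evZ I3ev_delta eqxx /= lexx ac !mulr1.
have rs_s : r * s = s.
  move/(congr1 (fun f => I3ev f a c c)): gh_r.
  by rewrite I3mulZl I3mulZr !I3mulZl edges_mul_idem !I3evZ I3ev_delta eqxx /= lexx ac !mulr1.
have rs : r = s by rewrite -rs_r rs_s.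
have r1 : r = 1 by apply: idem_eq1; rewrite // {2}rs rs_r.
by split; rewrite // -rs.
Qed.

Definition aut_perm (phi : A -> A) x : P := odflt x [pick y | phi 'e_x == 'e_y].

Section AutomorphismIdempotents.
Variables phi psi : A -> A.
Hypotheses (phi_aut : is_I3_aut phi) (psi_aut : is_I3_aut psi).
Hypotheses (phiK : cancel phi psi) (psiK : cancel psi phi).

Lemma aut_idem x : exists y, phi 'e_x = 'e_y.
Proof.
have [phi_lin phi_mul _] := phi_aut; have [psi_lin psi_mul _] := psi_aut.
pose chi f := I3ev (psi f) x x x.
have [y chiy] : exists y, chi 'e_y = 1.
  apply: mul_functional_idem => [f g|f|].
  - by rewrite /chi psi_mul I3ev_mul_diag.
  - by rewrite /chi (I3lin_expand psi_lin) I3ev_sum; apply: eq_bigr => t _; rewrite I3evZ.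
  - by exists (phi 'e_x); rewrite /chi phiK I3ev_delta eqxx lexx oner_eq0.
exists y; apply: eq_idem => [|||h].
- by rewrite -(I3lin0 phi_lin) (can_eq phiK) I3delta_eq0 lexx.
- have := idem_mul_idem x (psi 'e_y); rewrite -/(chi 'e_y) chiy I3scale1.
  by move/(congr1 phi); rewrite !phi_mul psiK.
- by move=> h; rewrite -(psiK h) -!phi_mul idem_mulK.
- by rewrite -(psiK h) -!phi_mul mul_idemK.
Qed.

Lemma aut_permE x : phi 'e_x = 'e_(aut_perm phi x).
Proof.
rewrite /aut_perm; case: pickP => [y /eqP //|none].
by have [y xy] := aut_idem x; move: (none y); rewrite xy eqxx.
Qed.

End AutomorphismIdempotents.

Section AutomorphismPerm.
Variables phi psi : A -> A.
Hypotheses (phi_aut : is_I3_aut phi) (psi_aut : is_I3_aut psi).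
Hypotheses (phiK : cancel phi psi) (psiK : cancel psi phi).
Local Notation s := (aut_perm phi).
Local Notation s' := (aut_perm psi).

Let phiE := aut_permE phi_aut psi_aut phiK psiK.
Let psiE := aut_permE psi_aut phi_aut psiK phiK.

Lemma aut_permK : cancel s s'.
Proof. by move=> x; apply: idem_inj; rewrite -psiE -phiE phiK. Qed.

Lemma aut_permKV : cancel s' s.
Proof. by move=> x; apply: idem_inj; rewrite -phiE -psiE psiK. Qed.

Lemma aut_perm_edges x z : (x <= z)%O ->
  [/\ (s x <= s z)%O, phi (I3delta x x z) = I3delta (s x) (s x) (s z)
    & phi (I3delta x z z) = I3delta (s x) (s z) (s z)].
Proof.
move=> xz; have [phi_lin phi_mul _] := phi_aut.
have phi_neq0 a b c : (a <= b <= c)%O -> phi (I3delta a b c) != 0.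
  by move=> abc; rewrite -(I3lin0 phi_lin) (can_eq phiK) I3delta_eq0 abc.
set g := phi (I3delta x x z); set h := phi (I3delta x z z).
have gE : g = I3scale (I3ev g (s x) (s x) (s z)) (I3delta (s x) (s x) (s z)).
  apply: row_shape => [|k w wz]; first by rewrite /g -phiE -phi_mul idem_mul_delta.
  have w'z : s' w != z by apply: contra wz => /eqP <-; rewrite aut_permKV.
  by rewrite /g -(psiK k) -(aut_permKV w) -phiE -!phi_mul delta_mul_annihr // I3lin0.
have hE : h = I3scale (I3ev h (s x) (s z) (s z)) (I3delta (s x) (s z) (s z)).
  apply: col_shape => [|k w wx]; first by rewrite /h -phiE -phi_mul delta_mul_idem.
  have w'x : s' w != x by apply: contra wx => /eqP <-; rewrite aut_permKV.
  by rewrite /h -(psiK k) -(aut_permKV w) -phiE -!phi_mul delta_mul_annihl // I3lin0.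
have g0 : g != 0 by rewrite phi_neq0 // lexx.
have gh_l : 'e_(s x) ** (g ** h) = g by rewrite /g /h -phiE -!phi_mul idem_mul_edges.
have gh_r : (g ** h) ** 'e_(s z) = h by rewrite /g /h -phiE -!phi_mul edges_mul_idem.
have [sxz g1 h1] := edges_coef_eq1 gE hE g0 gh_l gh_r.
by split => //; [rewrite {1}gE g1 | rewrite {1}hE h1]; rewrite I3scale1.
Qed.

Lemma aut_perm_delta a b c : (a <= b)%O -> (b <= c)%O ->
  phi (I3delta a b c) = I3delta (s a) (s b) (s c).
Proof.
move=> ab bc; have [_ phi_mul _] := phi_aut.
have [_ _ phi_ab] := aut_perm_edges ab; have [_ phi_bc _] := aut_perm_edges bc.
by rewrite -(delta_mul_delta a b c) phi_mul phi_ab phi_bc delta_mul_delta.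
Qed.

Lemma aut_eq_push : phi =1 I3push s.
Proof.
move=> f; have [phi_lin _ _] := phi_aut.
rewrite (I3lin_expand phi_lin); apply/ffunP => w; rewrite sum_ffunE ffunE [RHS]big_mkcond.
apply: eq_bigr => -[[[a b] c] abc] _; have /andP[/= ab bc] := abc.
by rewrite /I3deltaT /= aut_perm_delta // !ffunE eq_sym; case: ifP; rewrite ?mulr1 ?mulr0.
Qed.

End AutomorphismPerm.

Lemma aut_perm_poset_aut phi psi :
  is_I3_aut phi -> cancel phi psi -> cancel psi phi -> is_poset_aut (aut_perm phi).
Proof.
move=> phi_aut phiK psiK; have psi_aut := is_I3_aut_inv phi_aut phiK psiK.
have sK := aut_permK phi_aut psi_aut phiK psiK.
split; first by exists (aut_perm psi); last exact: aut_permKV.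
move=> x y; apply/idP/idP => [sxy|]; last by case/(aut_perm_edges phi_aut psi_aut phiK psiK).
by rewrite -(sK x) -(sK y); case: (aut_perm_edges psi_aut phi_aut psiK phiK sxy).
Qed.

End Indecomposable.

End IncidenceAlgebra.

Theorem corollary3p20 (d : Order.disp_t) (P : finPOrderType d)
  (R : comNzRingType) (hR : indecomposable R) :
  exists Psi : (P -> P) -> (I3 P R -> I3 P R),
    [/\ forall s, is_poset_aut s -> is_I3_aut (Psi s),
        forall s t, is_poset_aut s -> is_poset_aut t ->
          Psi (s \o t) =1 Psi s \o Psi t,
        forall s t, is_poset_aut s -> is_poset_aut t ->
          Psi s =1 Psi t -> s =1 t
      & forall phi, is_I3_aut phi -> exists2 s, is_poset_aut s & Psi s =1 phi].
Proof.
exists (@I3push d P R); split; [exact: I3push_aut | exact: I3push_comp | exact: I3push_inj |].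
move=> phi phi_aut; have [_ _ [psi phiK psiK]] := phi_aut.
exists (aut_perm phi); first exact: aut_perm_poset_aut phi_aut phiK psiK.
by move=> f; rewrite (aut_eq_push hR phi_aut (is_I3_aut_inv phi_aut phiK psiK) phiK psiK).
Qed.
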